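(* Consider Method 3.2 (described in the context) and suppose it does not terminate. Then for every limit point $(\bar x,\bar\sigma)$ of the sequence $\{(x_k,\sigma_k)\}_{k\in K}$ one has $\bar x\in X^*$ and $\bar\sigma=f^*$.
   Context: Setting: $f$ convex on $\mathbb{R}^n$; $D\subset\mathbb{R}^n$ convex closed with nonempty interior; $f$ attains its minimum $f^*$ on $D$; $X^*=\{x\in D:f(x)=f^*\}$, $x^*\in X^*$ fixed; $K=\{0,1,\dots\}$; $\operatorname{epi}(f,\mathbb{R}^n)=\{(x,\gamma):\gamma\ge f(x)\}$; for a set $Q$ (in $\mathbb{R}^n$ or $\mathbb{R}^{n+1}$), $W^1(u,Q)=\{a:\|a\|=1,\ \langle a,v-u\rangle\le0\ \forall v\in Q\}$. Method 3.2: choose $v'\in\operatorname{int}D$, $v''\in\operatorname{int}\operatorname{epi}(f,\mathbb{R}^n)$, a closed convex bounded $M_0\subset\mathbb{R}^n$ with $x^*\in M_0$, a closed convex $G_0\subset\mathbb{R}^{n+1}$ with $\operatorname{epi}(f,\mathbb{R}^n)\subset G_0$, a number $\bar\gamma\le\min\{f(x):x\in M_0\}$, and numbers $\varepsilon_k>0$, $k\in K$, with $\varepsilon_k\to0$; $i=k=0$. Step 1: $u_i=(y_i,\gamma_i)$ solves $\min\{\gamma:(x,\gamma)\in G_i,\ x\in M_k,\ \gamma\ge\bar\gamma\}$. Step 2: let $\bar u_i$ be the intersection point of the segment $[v'',u_i]$ with the boundary of $\operatorname{epi}(f,\mathbb{R}^n)$; if $\bar u_i=u_i$ and $y_i\in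 D$, stop. Step 3: if $\|\bar u_i-u_i\|>\varepsilon_k$, set $G_{i+1}=G_i\cap\{u:\langle b_i,u-\bar u_i\rangle\le0\}$ with $b_i\in W^1(\bar u_i,\operatorname{epi}(f,\mathbb{R}^n))$, $i\leftarrow i+1$, go to Step 1. Step 4: otherwise set $i_k=i$, $x_k=y_{i_k}$, $\sigma_k=\gamma_{i_k}$, and $G_{i+1}=S_i\cap\{u:\langle b_i,u-\bar u_i\rangle\le0\}$ with $b_i$ as in Step 3 and $S_i$ any closed convex set with $\operatorname{epi}(f,\mathbb{R}^n)\subset S_i$. Step 5: if $x_k\in D$ set $M_{k+1}=M_k$; otherwise let $\bar x_k$ be the intersection point of $[v',x_k]$ with the boundary of $D$ and set $M_{k+1}=M_k\cap\{x:\langle a_k,x-\bar x_k\rangle\le0\}$ with $a_k\in W^1(\bar x_k,D)$. Step 6: $i\leftarrow i+1$, $k\leftarrow k+1$; go to Step 1. *)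

(* R^n is modelled as row vectors 'rV[R]_n over an
   abstract R : realType (with its standard product topology); R^(n+1) is
   modelled as pairs 'rV[R]_n * R, i.e. u = (x, gamma), as in the paper. *)
From HB Require Import structures.
From mathcomp Require Import all_boot all_order all_algebra.
From mathcomp Require Import all_classical all_reals all_analysis.
Set Implicit Arguments. Unset Strict Implicit. Unset Printing Implicit Defensive.
Import Order.TTheory GRing.Theory Num.Theory.
Import numFieldNormedType.Exports.
Local Open Scope classical_set_scope.
Local Open Scope ring_scope.

Section Defs.
Variables (R : realType) (n : nat).
Notation vec := 'rV[R]_n.

Definition dot (u v : vec) : R := \sum_(j < n) u ord0 j * v ord0 j.
Definition enorm (u : vec) : R := Num.sqrt (dot u u).

Definition pdot (p q : vec * R) : R := dot p.1 q.1 + p.2 * q.2.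
Definition psub (p q : vec * R) : vec * R := (p.1 - q.1, p.2 - q.2).
Definition pnorm (p : vec * R) : R := Num.sqrt (pdot p p).

Definition vconvex_set (A : set vec) : Prop :=
  forall x y t, A x -> A y -> 0 <= t <= 1 -> A (t *: x + (1 - t) *: y).
Definition pconvex_set (A : set (vec * R)) : Prop :=
  forall p q t, A p -> A q -> 0 <= t <= 1 ->
    A (t *: p.1 + (1 - t) *: q.1, t * p.2 + (1 - t) * q.2).
Definition convex_fun (f : vec -> R) : Prop :=
  forall x y t, 0 <= t <= 1 ->
    f (t *: x + (1 - t) *: y) <= t * f x + (1 - t) * f y.
Definition bounded_vset (A : set vec) : Prop :=
  exists r : R, forall x, A x -> enorm x <= r.

Definition epi (f : vec -> R) : set (vec * R) := [set p | f p.1 <= p.2].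

Definition vboundary (A : set vec) : set vec := closure A `\` interior A.
Definition pboundary (A : set (vec * R)) : set (vec * R) :=
  closure A `\` interior A.

Definition vseg (a b : vec) : set vec :=
  [set x | exists t : R, 0 <= t <= 1 /\ x = a + t *: (b - a)].
Definition pseg (a b : vec * R) : set (vec * R) :=
  [set p | exists t : R, 0 <= t <= 1 /\
     p = (a.1 + t *: (b.1 - a.1), a.2 + t * (b.2 - a.2))].

Definition W1 (u : vec) (Q : set vec) : set vec :=
  [set a | enorm a = 1 /\ forall v, Q v -> dot a (v - u) <= 0].
Definition pW1 (u : vec * R) (Q : set (vec * R)) : set (vec * R) :=
  [set a | pnorm a = 1 /\ forall v, Q v -> pdot a (psub v u) <= 0].

Definition vhalf (a c : vec) : set vec := [set x | dot a (x - c) <= 0].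
Definition phalf (b c : vec * R) : set (vec * R) :=
  [set u | pdot b (psub u c) <= 0].

Definition Xstar (f : vec -> R) (D : set vec) (fstar : R) : set vec :=
  [set x | D x /\ f x = fstar].

(* A (nonterminating) run of Method 3.2, recorded by the global iteration
   counter i.  Data indexed by i: u i = (y_i, gamma_i), G i, ubar i, b i,
   S i, and kk i = the value of the counter k during iteration i.
   Data indexed by k: M k, xbar k, a k.  Iteration i is an "outer" iteration
   (goes through Step 4, i.e. i = i_k with k = kk i) iff
   ||ubar_i - u_i|| <= eps_(kk i); then x_k = y_i, sigma_k = gamma_i. *)
Definition is_outer (eps : nat -> R) (kk : nat -> nat)
  (u ubar : nat -> vec * R) (i : nat) : Prop :=
  pnorm (psub (ubar i) (u i)) <= eps (kk i).

Definition method32_run (f : vec -> R) (D : set vec) (v' : vec)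
  (v'' : vec * R) (M0 : set vec) (G0 : set (vec * R)) (gbar : R)
  (eps : nat -> R)
  (u ubar b : nat -> vec * R) (G S : nat -> set (vec * R)) (kk : nat -> nat)
  (M : nat -> set vec) (xbar a : nat -> vec) : Prop :=
  G 0 = G0 /\ M 0 = M0 /\ kk 0 = 0%N /\
   (* Step 1 *)
   (forall i, [/\ G i (u i), M (kk i) (u i).1, gbar <= (u i).2 &
      forall p : vec * R, G i p -> M (kk i) p.1 -> gbar <= p.2 ->
        (u i).2 <= p.2]) /\
   (* Step 2: ubar_i is the intersection of [v'', u_i] with bd epi; no stop *)
   (forall i, pseg v'' (u i) (ubar i) /\ pboundary (epi f) (ubar i)) /\
   (forall i, ~ (ubar i = u i /\ D (u i).1)) /\
   (forall i, pW1 (ubar i) (epi f) (b i)) /\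
   (* Step 3 *)
   (forall i, ~ is_outer eps kk u ubar i ->
      G i.+1 = G i `&` phalf (b i) (ubar i) /\ kk i.+1 = kk i) /\
   (* Steps 4, 5, 6 *)
   (forall i, is_outer eps kk u ubar i ->
      closed (S i) /\ pconvex_set (S i) /\ epi f `<=` S i /\
          G i.+1 = S i `&` phalf (b i) (ubar i) /\
          kk i.+1 = (kk i).+1 /\
          (D (u i).1 -> M (kk i).+1 = M (kk i)) /\
          (~ D (u i).1 ->
             [/\ vseg v' (u i).1 (xbar (kk i)),
                 vboundary D (xbar (kk i)),
                 W1 (xbar (kk i)) D (a (kk i)) &
                 M (kk i).+1 = M (kk i) `&` vhalf (a (kk i)) (xbar (kk i))])).

(* (xl, sl) is a limit point of the sequence (x_k, sigma_k)_k, i.e. of the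
   values u_i = (y_i, gamma_i) at the outer iterations i = i_0 < i_1 < ...:
   some subsequence (x_{k_j}, sigma_{k_j}) = u_{i_{k_j}} converges to it. *)
Definition limit_point_xs (eps : nat -> R) (kk : nat -> nat)
  (u ubar : nat -> vec * R) (l : vec * R) : Prop :=
  exists phi : nat -> nat,
    (forall j, (phi j < phi j.+1)%N) /\
    (forall j, is_outer eps kk u ubar (phi j)) /\
    (fun j => u (phi j)) @ \oo --> l.

End Defs.

(* The cuts added in Steps 3 and 4 are supporting half-spaces of epi f, so
   (x*, f x* ) stays feasible for every Step-1 problem and gamma_i <= f x*.
   A convex function whose epigraph has an interior point has a closed
   epigraph, so ||ubar_i - u_i|| <= eps_k -> 0 at the outer iterations puts
   every limit point (xl, sl) in epi f: f xl <= sl <= f x*.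
   For feasibility, when x_k is not in D the cut at the boundary point
   xbar_k = v' + tau (x_k - v') keeps x_(k+1) on its far side while a ball
   B(v', r) inside D lies on its near side; in the sup norm this forces
   (1 - tau) r <= 2 n ||x_k - x_(k+1)||, so the points xbar_k of D converge to
   xl as well and xl is in the closed set D.  Hence f x* <= f xl <= sl <= f x*. *)

From HB Require Import structures.
From mathcomp Require Import all_boot all_order all_algebra.
From mathcomp Require Import all_classical all_reals all_analysis.
From mathcomp Require Import ring lra.
Import Order.TTheory GRing.Theory Num.Theory.
Import numFieldNormedType.Exports.
Local Open Scope classical_set_scope.
Local Open Scope ring_scope.

Set Implicit Arguments.
Unset Strict Implicit.
Unset Printing Implicit Defensive.

Section EuclideanVectors.
Context {R : realType} {n : nat}.
Implicit Types (x y a : 'rV[R]_n) (p : 'rV[R]_n * R).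

Lemma dotDr a x y : dot a (x + y) = dot a x + dot a y.
Proof. by rewrite /dot -big_split; apply: eq_bigr => j _; rewrite !mxE mulrDr. Qed.

Lemma dotZr a c x : dot a (c *: x) = c * dot a x.
Proof. by rewrite /dot mulr_sumr; apply: eq_bigr => j _; rewrite !mxE mulrCA. Qed.

Lemma dotNr a x : dot a (- x) = - dot a x.
Proof. by rewrite -scaleN1r dotZr mulN1r. Qed.

Lemma dotBr a x y : dot a (x - y) = dot a x - dot a y.
Proof. by rewrite dotDr dotNr. Qed.

Lemma dot_ge0 x : 0 <= dot x x.
Proof. by apply: sumr_ge0 => j _; rewrite -expr2 sqr_ge0. Qed.

Lemma enorm1_dot a : enorm a = 1 -> dot a a = 1.
Proof. by move=> a1; rewrite -(sqr_sqrtr (dot_ge0 a)) -/(enorm a) a1 expr1n. Qed.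

Lemma normr_entry_le_enorm x j : `|x ord0 j| <= enorm x.
Proof.
rewrite -sqrtr_sqr; apply: ler_wsqrtr.
rewrite /dot (bigD1 j) //= expr2 lerDl.
by apply: sumr_ge0 => i _; rewrite -expr2 sqr_ge0.
Qed.

Lemma normr_le_enorm x : `|x| <= enorm x.
Proof.
rewrite [leLHS]/Num.Def.normr /= mx_normrE.
by apply: bigmax_le => [|[i j] _]; rewrite ?sqrtr_ge0 // (ord1 i) normr_entry_le_enorm.
Qed.

Lemma dot_le_normr a x : dot a x <= n%:R * (`|a| * `|x|).
Proof.
have entry_le y j : `|y ord0 j| <= `|y|.
  rewrite [leRHS]/Num.Def.normr /= mx_normrE.
  by apply/bigmax_geP; right; exists (ord0, j).
apply: le_trans (ler_norm _) _; apply: le_trans (ler_norm_sum _ _ _) _.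
rewrite mulr_natl -[n in _ *+ n]card_ord -sumr_const; apply: ler_sum => j _.
by rewrite normrM ler_pM.
Qed.

Lemma normr_le_pnorm p : `|p| <= pnorm p.
Proof.
rewrite prod_normE ge_max; apply/andP; split.
  apply: le_trans (normr_le_enorm _) _; apply: ler_wsqrtr.
  by rewrite /pdot lerDl -expr2 sqr_ge0.
rewrite -sqrtr_sqr; apply: ler_wsqrtr.
by rewrite /pdot expr2 lerDr dot_ge0.
Qed.

Lemma supporting_cut_gap (D : set 'rV[R]_n) v x y a (r tau : R) :
  0 < r -> ball v r `<=` D -> 0 <= tau <= 1 ->
  W1 (v + tau *: (x - v)) D a -> dot a (y - (v + tau *: (x - v))) <= 0 ->
  (1 - tau) * r <= 2 * n%:R * `|x - y|.
Proof.
move=> r_gt0 vrD /andP[tau_ge0 tau_le1] [a1 a_supp] y_cut.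
(* The cut at [v + (r/2) a], a point of [D], gives [r/2 <= tau <a, x - v>];
   the cut at [y] gives [(1 - tau) <a, x - v> <= <a, x - y>]. *)
set g := dot a (x - v).
have a_le1 : `|a| <= 1 by rewrite -a1 normr_le_enorm.
have inner_pt : D (v + (r / 2) *: a).
  apply: vrD; rewrite -ball_normE /ball_ /= opprD addNKr normrN normrZ.
  by rewrite gtr0_norm ?divr_gt0 //; nra.
have := a_supp _ inner_pt.
have -> : v + (r / 2) *: a - (v + tau *: (x - v)) = (r / 2) *: a - tau *: (x - v).
  by apply/rowP => j; rewrite !mxE; ring.
rewrite dotBr !dotZr enorm1_dot // -/g mulr1 => tau_g.
move: y_cut.
have -> : y - (v + tau *: (x - v)) = - (x - y) + (1 - tau) *: (x - v).
  by apply/rowP => j; rewrite !mxE; ring.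
rewrite dotDr dotNr dotZr -/g => y_g.
have g_ge : r / 2 <= g.
  have g_gt0 : 0 < g by rewrite ltNge; apply/negP => g_le0; nra.
  nra.
have := dot_le_normr a (x - y).
have : n%:R * (`|a| * `|x - y|) <= n%:R * `|x - y|.
  by rewrite ler_wpM2l // ler_piMl.
nra.
Qed.

End EuclideanVectors.

Lemma cvgn_infty_ge (g : nat -> nat) : (forall j, (j <= g j)%N) -> g @ \oo --> \oo.
Proof. by move=> g_ge P [N _ PN]; exists N => // j /= Nj; apply/PN/(leq_trans Nj). Qed.

Section NormedLimits.
Context {R : realFieldType} {V : normedModType R}.

Lemma cvg0_norm_le (g : nat -> V) (e : nat -> R) :
  (forall j, `|g j| <= e j) -> e @ \oo --> 0 -> g @ \oo --> 0.
Proof.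
move=> g_le e0; apply: norm_cvg0.
apply: (@squeeze_cvgr _ _ _ _ (fun=> 0) e) => //; last exact: cvg_cst.
by near=> j; rewrite normr_ge0 g_le.
Unshelve. all: by end_near.
Qed.

Lemma closed_radial_limit (D : set V) (v l : V) (x : nat -> V) (C : R) :
  closed D -> x @ \oo --> l ->
  (forall j, exists tau, 0 <= 1 - tau <= C * `|x j - x j.+1|
                         /\ D (v + tau *: (x j - v))) ->
  D l.
Proof.
move=> D_closed x_l /choice[tau tauP].
have xS_l : (fun j => x j.+1) @ \oo --> l.
  by rewrite -[X in X @ _ --> _]/[sequence x j.+1]_j cvg_shiftS.
have gap0 : (fun j => 1 - tau j) @ \oo --> (0 : R).
  apply: (@squeeze_cvgr _ _ _ _ (fun=> 0) (fun j => C * `|x j - x j.+1|)).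
  - by near=> j; have [] := tauP j.
  - exact: cvg_cst.
  suff : (fun j => C * `|x j - x j.+1|) @ \oo --> C * `|l - l|.
    by rewrite subrr normr0 mulr0.
  by apply: cvgM; [exact: cvg_cst | apply: cvg_norm; apply: cvgB].
have tau1 : tau @ \oo --> (1 : R).
  have -> : tau = (fun j => 1 - (1 - tau j)) by apply/funext => j; rewrite subKr.
  by rewrite -[X in _ --> X](subr0 1); apply: cvgB => //; exact: cvg_cst.
suff : D (v + 1 *: (l - v)) by rewrite scale1r addrC subrK.
apply: (@closed_cvg _ _ \oo _ (fun j => v + tau j *: (x j - v)) D D_closed).
  by near=> j; have [] := tauP j.
apply: cvgD; first exact: cvg_cst.
by apply: cvgZ => //; apply: cvgB => //; exact: cvg_cst.
Unshelve. all: by end_near.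
Qed.

End NormedLimits.

Lemma le0_of_le_mul_small (R : realFieldType) (d K : R) :
  (forall t, 0 < t -> t <= 1 -> d <= t * K) -> d <= 0.
Proof.
move=> dK; rewrite leNgt; apply/negP => d_gt0.
have den_gt0 : 0 < d + `|K| + 1 by rewrite -addrA ltr_wpDr.
set t := d / (d + `|K| + 1).
have t_gt0 : 0 < t by rewrite divr_gt0.
have t_le1 : t <= 1 by rewrite ler_pdivrMr // mul1r -addrA lerDl.
have tK : t * K <= t * `|K| by rewrite ler_pM2l // ler_norm.
have td : t * (d + `|K| + 1) = d by rewrite mulfVK // gt_eqF.
have := dK t t_gt0 t_le1; nra.
Qed.

Section ConvexEpigraph.
Context {R : realType} {n : nat}.
Variable f : 'rV[R]_n -> R.
Hypothesis f_convex : convex_fun f.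

Lemma convex_epi : pconvex_set (epi f).
Proof.
move=> p q t p_epi q_epi /[dup] t01 /andP[t_ge0 t_le1]; rewrite /epi /=.
apply: le_trans (f_convex _ _ t01) _.
by apply: lerD; apply: ler_wpM2l; rewrite ?subr_ge0.
Qed.

Lemma convex_le_of_chord x y s c :
  (forall t, 0 < t -> t <= 1 -> f ((1 - t) *: x + t *: y) <= (1 - t) * s + t * c) ->
  f x <= s.
Proof.
(* [x] is a convex combination of a chord point and the reflection [2x - y]. *)
move=> chord; set z := 2 *: x - y.
rewrite -subr_le0; apply: (@le0_of_le_mul_small _ _ (c + f z - s - f x)).
move=> t t_gt0 t_le1.
set q := (1 + t)^-1.
have t1_gt0 : 0 < 1 + t by rewrite ltr_wpDr // ltW.
have q01 : 0 <= q <= 1 by rewrite invr_ge0 invf_le1 // ltW //= lerDl ltW.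
have := f_convex ((1 - t) *: x + t *: y) z q01.
have -> : q *: ((1 - t) *: x + t *: y) + (1 - q) *: z = x.
  by apply/rowP => j; rewrite /z /q !mxE; field; rewrite gt_eqF.
move=> /(ler_wpM2l (ltW t1_gt0)).
have -> : (1 + t) * (q * f ((1 - t) *: x + t *: y) + (1 - q) * f z)
    = f ((1 - t) *: x + t *: y) + t * f z.
  by rewrite /q; field; rewrite gt_eqF.
have := chord t t_gt0 t_le1; lra.
Qed.

Lemma closure_epi_chord v p t :
  interior (epi f) v -> closure (epi f) p -> 0 < t -> t <= 1 ->
  f ((1 - t) *: p.1 + t *: v.1) <= (1 - t) * p.2 + t * v.2.
Proof.
move=> /nbhs_ballP[r /= r_gt0 vr_epi] p_cl t_gt0 t_le1.
have d_gt0 : 0 < t * r / 2 by rewrite divr_gt0 // mulr_gt0.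
have [c [c_epi [c1 c2]]] := p_cl _ (nbhsx_ballx p _ d_gt0).
rewrite -ball_normE /ball_ /= in c1; rewrite /ball /= in c2.
set k := (1 - t) / t.
have k_ge0 : 0 <= k by rewrite divr_ge0 ?subr_ge0 // ltW.
have kd : k * (t * r / 2) = (1 - t) * r / 2 by rewrite /k; field; rewrite gt_eqF.
set w := (v.1 + k *: (p.1 - c.1), v.2 + k * (p.2 - c.2)).
have w_epi : epi f w.
  apply: vr_epi; split => /=.
    rewrite -ball_normE /ball_ /= opprD addNKr normrN normrZ ger0_norm //.
    have : k * `|p.1 - c.1| <= k * (t * r / 2) by rewrite ler_wpM2l // ltW.
    rewrite kd; nra.
  rewrite /ball /= opprD addNKr normrN normrM ger0_norm //.
  have : k * `|p.2 - c.2| <= k * (t * r / 2) by rewrite ler_wpM2l // ltW.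
  rewrite kd; nra.
have t01 : 0 <= t <= 1 by rewrite ltW.
have := convex_epi w_epi c_epi t01; rewrite /epi /=.
have -> : t *: w.1 + (1 - t) *: c.1 = (1 - t) *: p.1 + t *: v.1.
  by apply/rowP => j; rewrite /w /k /= !mxE; field; rewrite gt_eqF.
have -> // : t * w.2 + (1 - t) * c.2 = (1 - t) * p.2 + t * v.2.
by rewrite /w /k /=; field; rewrite gt_eqF.
Qed.

Lemma convex_epi_closed : interior (epi f) !=set0 -> closed (epi f).
Proof.
move=> [v v_int] p p_cl; apply: (@convex_le_of_chord _ v.1 _ v.2) => t t_gt0 t_le1.
exact: closure_epi_chord.
Qed.

End ConvexEpigraph.

Section Method32Run.
Context {R : realType} {n : nat}.
Variables (f : 'rV[R]_n -> R) (D : set 'rV[R]_n) (v' : 'rV[R]_n)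
  (v'' : 'rV[R]_n * R) (M0 : set 'rV[R]_n) (G0 : set ('rV[R]_n * R))
  (gbar : R) (eps : nat -> R) (u ubar b : nat -> 'rV[R]_n * R)
  (G S : nat -> set ('rV[R]_n * R)) (kk : nat -> nat) (M : nat -> set 'rV[R]_n)
  (xbar a : nat -> 'rV[R]_n).
Hypothesis run : method32_run f D v' v'' M0 G0 gbar eps u ubar b G S kk M xbar a.

Local Notation outer := (is_outer eps kk u ubar).

(* [run] unpacks as [G 0, M 0, kk 0, Step 1, Step 2, no stop, b_i, Step 3,
   Steps 4-6]. *)

Lemma kk_outer_succ i : outer i -> kk i.+1 = (kk i).+1.
Proof.
have [_ [_ [_ [_ [_ [_ [_ [_ step4]]]]]]]] := run.
by move=> /step4[_ [_ [_ [_ []]]]].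
Qed.

Lemma kk_le_succ i : (kk i <= kk i.+1)%N.
Proof.
have [_ [_ [_ [_ [_ [_ [_ [step3 _]]]]]]]] := run.
have [/kk_outer_succ -> // | /step3[_ ->] //] := pselect (outer i).
Qed.

Lemma kk_nondecreasing : {homo kk : i j / (i <= j)%N}.
Proof. exact: homo_leq leqnn leq_trans kk_le_succ. Qed.

Lemma kk_outer_subseq_ge (phi : nat -> nat) :
  (forall j, (phi j < phi j.+1)%N) -> (forall j, outer (phi j)) ->
  forall j, (j <= kk (phi j))%N.
Proof.
move=> phi_incr phi_outer; elim=> [|j IHj] //.
apply: leq_trans _ (kk_nondecreasing (phi_incr j)).
by rewrite kk_outer_succ.
Qed.

Lemma M_succ_sub i : M (kk i.+1) `<=` M (kk i).
Proof.
have [_ [_ [_ [_ [_ [_ [_ [step3 step4]]]]]]]] := run.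
have [i_outer | /step3[_ -> //]] := pselect (outer i).
have [_ [_ [_ [_ [-> [M_same M_cut]]]]]] := step4 _ i_outer.
have [/M_same -> // | /M_cut[_ _ _ ->]] := pselect (D (u i).1).
exact: subIsetl.
Qed.

Lemma M_nonincreasing i j : (i <= j)%N -> M (kk j) `<=` M (kk i).
Proof.
move=> /subnK <-; elim: (j - i)%N => // m IHm.
by rewrite addSn; apply: subset_trans (@M_succ_sub (m + i)) IHm.
Qed.

Lemma feasible_in_M x : D x -> M0 x -> forall i, M (kk i) x.
Proof.
move=> Dx M0x; have [_ [M_0 [kk_0 [_ [_ [_ [_ [step3 step4]]]]]]]] := run.
elim=> [|i IHi]; first by rewrite kk_0 M_0.
have [i_outer | /step3[_ -> //]] := pselect (outer i).
have [_ [_ [_ [_ [-> [M_same M_cut]]]]]] := step4 _ i_outer.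
have [/M_same -> // | /M_cut[_ _ [_ a_supp] ->]] := pselect (D (u i).1).
by split => //; apply: a_supp.
Qed.

Lemma epi_sub_G : epi f `<=` G0 -> forall i, epi f `<=` G i.
Proof.
move=> epi_G0; have [G_0 [_ [_ [_ [_ [_ [b_supp [step3 step4]]]]]]]] := run.
elim=> [|i IHi]; first by rewrite G_0.
have b_half : epi f `<=` phalf (b i) (ubar i) by move=> p; apply: (b_supp i).2.
have [i_outer | /step3[-> _] p p_epi] := pselect (outer i); last by split; auto.
have [_ [_ [epi_S [-> _]]]] := step4 _ i_outer.
by move=> p p_epi; split; auto.
Qed.

Lemma u_snd_le x : D x -> M0 x -> epi f `<=` G0 -> gbar <= f x ->
  forall i, (u i).2 <= f x.
Proof.
move=> Dx M0x epi_G0 gbar_le i.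
have [_ [_ [_ [step1 _]]]] := run; have [_ _ _ u_min] := step1 i.
have x_epi : epi f (x, f x) by rewrite /epi /=.
by apply: (u_min (x, f x)) => /=; [exact: epi_sub_G x_epi | exact: feasible_in_M |].
Qed.

Lemma ubar_epi : convex_fun f -> interior (epi f) v'' -> forall i, epi f (ubar i).
Proof.
move=> f_convex v''_int i; have [_ [_ [_ [_ [step2 _]]]]] := run.
exact: (convex_epi_closed f_convex (ex_intro _ v'' v''_int)) (step2 i).2.1.
Qed.

Lemma outer_cut_gap (r : R) i j :
  0 < r -> ball v' r `<=` D -> closed D -> outer i -> ~ D (u i).1 -> (i < j)%N ->
  exists tau, 0 <= tau <= 1 /\ D (v' + tau *: ((u i).1 - v'))
              /\ (1 - tau) * r <= 2 * n%:R * `|(u i).1 - (u j).1|.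
Proof.
move=> r_gt0 v'rD D_closed i_outer x_notD ij.
have [_ [_ [_ [step1 [_ [_ [_ [_ step4]]]]]]]] := run.
have [_ [_ [_ [_ [kk_succ [_ M_cut]]]]]] := step4 _ i_outer.
have [[tau [tau01 xbar_eq]] [xbar_cl _] a_supp M_eq] := M_cut x_notD.
rewrite {}xbar_eq in xbar_cl a_supp M_eq.
exists tau; split=> //; split; first exact: D_closed.
apply: supporting_cut_gap r_gt0 v'rD tau01 a_supp _.
have : M (kk i).+1 (u j).1.
  by rewrite -kk_succ; apply: (M_nonincreasing ij); have [] := step1 j.
by rewrite M_eq => -[].
Qed.

Section LimitPoint.
Variables (phi : nat -> nat) (xl : 'rV[R]_n) (sl : R).
Hypotheses (phi_incr : forall j, (phi j < phi j.+1)%N)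
  (phi_outer : forall j, outer (phi j))
  (phi_cvg : (fun j => u (phi j)) @ \oo --> (xl, sl)).

Lemma limit_snd_le x : D x -> M0 x -> epi f `<=` G0 -> gbar <= f x -> sl <= f x.
Proof.
move=> Dx M0x epi_G0 gbar_le.
apply: (closed_cvg _ (@closed_le _ (f x)) _ _ (cvg_comp _ _ phi_cvg cvg_snd)).
by near=> j; exact: u_snd_le.
Unshelve. all: by end_near.
Qed.

Lemma limit_epi :
  convex_fun f -> interior (epi f) v'' -> eps @ \oo --> 0 -> epi f (xl, sl).
Proof.
move=> f_convex v''_int eps0.
have gap0 : (fun j => ubar (phi j) - u (phi j)) @ \oo --> (0 : 'rV[R]_n * R).
  apply: (@cvg0_norm_le _ _ _ (fun j => eps (kk (phi j)))).
    by move=> j; apply: le_trans (normr_le_pnorm _) (phi_outer j).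
  exact: cvg_comp (cvgn_infty_ge (kk_outer_subseq_ge phi_incr phi_outer)) eps0.
apply: (@closed_cvg _ _ \oo _ (fun j => ubar (phi j)) _
  (convex_epi_closed f_convex (ex_intro _ v'' v''_int))).
  by near=> j; exact: ubar_epi.
rewrite -[X in _ --> X]addr0.
have -> : (fun j => ubar (phi j)) = (fun j => u (phi j) + (ubar (phi j) - u (phi j))).
  by apply/funext => j; rewrite addrC subrK.
exact: cvgD.
Unshelve. all: by end_near.
Qed.

Lemma limit_fst_feasible : closed D -> interior D v' -> D xl.
Proof.
move=> D_closed /nbhs_ballP[r /= r_gt0 v'rD].
apply: (closed_radial_limit (v := v') (C := 2 * n%:R / r) D_closed
  (cvg_comp _ _ phi_cvg cvg_fst)) => j.
have [xD | x_notD] := pselect (D (u (phi j)).1).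
  exists 1; rewrite scale1r subrKC subrr lexx; split=> //.
  by rewrite !mulr_ge0 // invr_ge0 ltW.
have [tau [/andP[_ tau_le1] [tauD gap]]] :=
  outer_cut_gap r_gt0 v'rD D_closed (phi_outer j) x_notD (phi_incr j).
by exists tau; rewrite subr_ge0 tau_le1 mulrAC ler_pdivlMr.
Qed.

End LimitPoint.
End Method32Run.

Theorem theorem3p2p2 (R : realType) (n : nat)
  (f : 'rV[R]_n -> R) (D : set 'rV[R]_n) (xstar : 'rV[R]_n)
  (v' : 'rV[R]_n) (v'' : 'rV[R]_n * R) (M0 : set 'rV[R]_n)
  (G0 : set ('rV[R]_n * R)) (gbar : R) (eps : nat -> R)
  (u ubar b : nat -> 'rV[R]_n * R) (G S : nat -> set ('rV[R]_n * R))
  (kk : nat -> nat) (M : nat -> set 'rV[R]_n) (xbar a : nat -> 'rV[R]_n)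
  (xl : 'rV[R]_n) (sl : R) :
  convex_fun f ->
  vconvex_set D -> closed D -> interior D !=set0 ->
  D xstar -> (forall x, D x -> f xstar <= f x) ->
  interior D v' -> interior (epi f) v'' ->
  closed M0 -> vconvex_set M0 -> bounded_vset M0 -> M0 xstar ->
  closed G0 -> pconvex_set G0 -> epi f `<=` G0 ->
  (forall x, M0 x -> gbar <= f x) ->
  (forall k, 0 < eps k) -> eps @ \oo --> 0 ->
  method32_run f D v' v'' M0 G0 gbar eps u ubar b G S kk M xbar a ->
  limit_point_xs eps kk u ubar (xl, sl) ->
  Xstar f D (f xstar) xl /\ sl = f xstar.
Proof.
move=> f_convex _ D_closed _ xs_D xs_min v'_int v''_int _ _ _ xs_M0 _ _ epi_G0
  gbar_le _ eps0 run [phi [phi_incr [phi_outer phi_cvg]]].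
have xl_D := limit_fst_feasible run phi_incr phi_outer phi_cvg D_closed v'_int.
have fxl_le : f xl <= sl :=
  limit_epi run phi_incr phi_outer phi_cvg f_convex v''_int eps0.
have sl_le := limit_snd_le run phi_cvg xs_D xs_M0 epi_G0 (gbar_le _ xs_M0).
have := xs_min _ xl_D.
by split; [split=> //|]; apply/eqP; rewrite eq_le; apply/andP; split; lra.
Qed.
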